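(* Let $N\ge2$, $\sigma^*\in\mathbb{R}^d_{>0}$ with $\sigma_1^*=\max_k\sigma_k^*$, and consider the recursion $$\sigma_i(t+1)=\sigma_i(t)\Big(1+\frac{\eta}{N}\sigma_i(t)^{1-\frac2N}(\sigma_i^*-\sigma_i(t))\Big)^N,$$ with $0\le\sigma_i(0)<\sigma_i^*$. If $\eta\le(1/\sigma_1^* )^{2-\frac2N}$, then $\sigma_i(t)\le\sigma_i^*$ for all $t\ge0$.
   Context: This recursion is gradient descent with learning rate $\eta$ on $\ell_N(w)=\frac{1}{2N^2}\|w^N-\sigma^*\|^2$ over nonnegative weights $w$, written in terms of $\sigma_i=w_i^N$. *)

From mathcomp Require Import all_boot all_order all_algebra.
From mathcomp Require Import all_classical all_reals all_analysis.
Set Implicit Arguments. Unset Strict Implicit. Unset Printing Implicit Defensive.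
Import Order.TTheory GRing.Theory Num.Theory.
Local Open Scope ring_scope.

Definition gd_step (R : realType) (N : nat) (eta s_star s : R) : R :=
  s * (1 + eta / N%:R * (s `^ (1 - 2 / N%:R)) * (s_star - s)) ^+ N.

(** Write [a] for the target [sstar i] and [p = 1 - 2/N]. Since [a] is at most
    the largest target, the step-size bound gives [eta * s^p <= 1/a] on
    [[0, a]], so one step multiplies [s] by at most
    [(1 + (1 - s/a)/N)^N <= exp (1 - s/a)]. As [exp] lies above its tangent at
    [1], [y * exp (1 - y) <= 1], hence the new iterate is at most [a]. *)

From mathcomp Require Import all_boot all_order all_algebra.
From mathcomp Require Import all_classical all_reals all_analysis.
From mathcomp.algebra_tactics Require Import ring lra.
Import Order.TTheory GRing.Theory Num.Theory.
Local Open Scope ring_scope.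

Section StepBounds.
Context {R : realType}.

Lemma expr1Ddivn_le_expR (n : nat) (x : R) :
  (0 < n)%N -> - n%:R <= x -> (1 + x / n%:R) ^+ n <= expR x.
Proof.
move=> n_gt0 x_ge; have n_pos : 0 < n%:R :> R by rewrite ltr0n.
have n_neq0 : n%:R != 0 :> R by rewrite gt_eqF.
have base_ge0 : 0 <= 1 + x / n%:R.
  by rewrite -(ler_pM2r n_pos) mul0r mulrDl divfK // mul1r; lra.
have -> : expR x = expR (x / n%:R) ^+ n by rewrite -expRM_natr divfK.
by apply: lerXn2r; rewrite ?nnegrE ?expR_ge1Dx ?(ltW (expR_gt0 _)).
Qed.

Lemma mulr_expR1B_le1 (y : R) : y * expR (1 - y) <= 1.
Proof.
have tangent : y <= expR (y - 1) by apply: le_trans (expR_ge1Dx _); lra.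
have expR_cancel : expR (y - 1) * expR (1 - y) = 1.
  by rewrite -expRD [X in expR X](_ : _ = 0) ?expR0 //; ring.
by rewrite -[leRHS]expR_cancel ler_pM2r ?expR_gt0.
Qed.

Lemma mulr_expr1D_le (n : nat) (a s u : R) :
  (0 < n)%N -> 0 < a -> 0 <= s <= a -> 0 <= u <= (a - s) / (n%:R * a) ->
  s * (1 + u) ^+ n <= a.
Proof.
move=> n_gt0 a_gt0 /andP[s_ge0 s_le_a] /andP[u_ge0 u_le].
have n_pos : 0 < n%:R :> R by rewrite ltr0n.
have ratio_le1 : s / a <= 1 by rewrite ler_pdivrMr ?mul1r.
have ratio_ge0 : 0 <= s / a by rewrite divr_ge0 // ltW.
rewrite (_ : (a - s) / (n%:R * a) = (1 - s / a) / n%:R) in u_le; last first.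
  by field; rewrite !gt_eqF.
apply: le_trans (_ : s * expR (1 - s / a) <= a).
  apply: (ler_wpM2l s_ge0).
  have exp_bound := @expr1Ddivn_le_expR n (1 - s / a) n_gt0.
  apply: le_trans (exp_bound _); last by lra.
  by apply: lerXn2r; rewrite ?nnegrE; lra.
rewrite (_ : s * _ = a * (s / a * expR (1 - s / a))); last by field; rewrite gt_eqF.
by apply: ler_piMr; [exact: ltW | exact: mulr_expR1B_le1].
Qed.

Lemma powRD1_mul_le {b p s : R} :
  0 < b -> 0 <= p -> 0 <= s <= b -> b^-1 `^ (1 + p) * s `^ p <= b^-1.
Proof.
move=> b_gt0 p_ge0 /andP[s_ge0 s_le_b].
have binv_ge0 : 0 <= b^-1 by rewrite invr_ge0 ltW.
have ratio_le1 : b^-1 * s <= 1 by rewrite mulrC ler_pdivrMr ?mul1r.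
have binv_neq0 : b^-1 != 0 by rewrite invr_eq0 gt_eqF.
rewrite powRD ?binv_neq0 ?implybT // powRr1 // -mulrA -powRM //.
apply: ler_piMr => //; apply: le_trans (ge0_ler_powR p_ge0 _ _ ratio_le1) _.
- by rewrite nnegrE mulr_ge0.
- by rewrite nnegrE.
- by rewrite powR1.
Qed.

Lemma gd_step_ge0_le {N : nat} {eta a b s : R} :
  (2 <= N)%N -> 0 < a -> a <= b -> 0 <= eta ->
  eta <= b^-1 `^ (2 - 2 / N%:R) -> 0 <= s <= a ->
  0 <= gd_step N eta a s <= a.
Proof.
move=> N_ge2 a_gt0 a_le_b eta_ge0 eta_le /andP[s_ge0 s_le_a].
have N_ge2R : 2 <= N%:R :> R by rewrite (ler_nat R 2 N).
have N_pos : 0 < N%:R :> R by lra.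
set p : R := 1 - 2 / N%:R.
have p_ge0 : 0 <= p by rewrite subr_ge0 ler_pdivrMr // mul1r.
have rate : eta * s `^ p <= a^-1.
  rewrite (_ : 2 - 2 / N%:R = 1 + p) in eta_le; last by rewrite /p; ring.
  have s_le_b : 0 <= s <= b by rewrite s_ge0 (le_trans s_le_a a_le_b).
  apply: (le_trans (ler_wpM2r (powR_ge0 s p) eta_le)).
  apply: (le_trans (powRD1_mul_le (lt_le_trans a_gt0 a_le_b) p_ge0 s_le_b)).
  by rewrite lef_pV2 ?posrE //; lra.
rewrite /gd_step -/p.
set u := eta / N%:R * s `^ p * (a - s).
have u_ge0 : 0 <= u by rewrite /u !mulr_ge0 ?divr_ge0 ?powR_ge0 ?ler0n ?subr_ge0.
have u_le : u <= (a - s) / (N%:R * a).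
  have -> : u = eta * s `^ p * ((a - s) / N%:R) by rewrite /u; field; rewrite gt_eqF.
  have -> : (a - s) / (N%:R * a) = a^-1 * ((a - s) / N%:R).
    by field; rewrite !gt_eqF.
  by apply: ler_wpM2r rate; rewrite divr_ge0 ?ler0n ?subr_ge0.
apply/andP; split; first by rewrite mulr_ge0 // exprn_ge0 //; lra.
apply: mulr_expr1D_le; rewrite ?(ltnW N_ge2) //; apply/andP; split => //.
Qed.

End StepBounds.

Theorem lemma1 (R : realType) (N d : nat) (sstar : 'I_d -> R) (i1 : 'I_d)
    (eta : R) (sigma : nat -> 'I_d -> R) :
  (2 <= N)%N ->
  (forall k, 0 < sstar k) ->
  (forall k, sstar k <= sstar i1) ->
  0 < eta ->
  (forall i t, sigma t.+1 i = gd_step N eta (sstar i) (sigma t i)) ->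
  (forall i, 0 <= sigma 0%N i < sstar i) ->
  eta <= (1 / sstar i1) `^ (2 - 2 / N%:R) ->
  forall t i, sigma t i <= sstar i.
Proof.
move=> N_ge2 sstar_gt0 sstar_le eta_gt0 sigmaS sigma0 eta_le t i.
rewrite div1r in eta_le.
suff /andP[] : 0 <= sigma t i <= sstar i by [].
elim: t => [|t IHt]; first by case/andP: (sigma0 i) => -> /ltW ->.
rewrite sigmaS.
exact: gd_step_ge0_le N_ge2 (sstar_gt0 i) (sstar_le i) (ltW eta_gt0) eta_le IHt.
Qed.
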